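(* For all $k\in\mathbb N$, all $n>k$ and all irrational $x\in(0,1)$, $$|\delta_k(T^{n-k}x)-\delta_n(x)|<-\log(1-2^{-k/2}).$$
   Context: $T:(0,1)\to[0,1)$ is the Gauss map $T(x)=\{1/x\}$ (fractional part of $1/x$). For irrational $x\in(0,1)$ with continued fraction expansion $[a_1,a_2,\ldots]$, $q_n(x)$ is the denominator (in lowest terms) of the $n$-th convergent $p_n/q_n=[a_1,\ldots,a_n]$, and $\delta_n(x)=\log q_n(x)+\sum_{j=0}^{n-1}\log(T^jx)$, with $\log$ the natural logarithm. *)

From Stdlib Require Import Reals.
Open Scope R_scope.

(* floor: Int_part y = up y - 1 is the integer part (floor) of y. *)
Definition frac (y : R) : R := y - IZR (Int_part y).

Definition gauss (x : R) : R := frac (/ x).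

Fixpoint iterT (j : nat) (x : R) : R :=
  match j with
  | O => x
  | S j' => gauss (iterT j' x)
  end.

(* cf_digit x j = a_{j+1}(x) = floor (1 / T^j x) *)
Definition cf_digit (x : R) (j : nat) : R := IZR (Int_part (/ iterT j x)).

(* qpair n x = (q_n(x), q_{n-1}(x)), via q_{-1}=0, q_0=1,
   q_n = a_n q_{n-1} + q_{n-2}. *)
Fixpoint qpair (n : nat) (x : R) : R * R :=
  match n with
  | O => (1, 0)
  | S m => let (q, q') := qpair m x in (cf_digit x m * q + q', q)
  end.

Definition cf_q (n : nat) (x : R) : R := fst (qpair n x).

Fixpoint logsum (n : nat) (x : R) : R :=
  match n with
  | O => 0
  | S m => logsum m x + ln (iterT m x)
  end.

Definition delta (n : nat) (x : R) : R := ln (cf_q n x) + logsum n x.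

Definition irrational (x : R) : Prop :=
  forall p q : Z, q <> 0%Z -> x <> IZR p / IZR q.

From Stdlib Require Import Reals Lra Lia.
Open Scope R_scope.

(* Write r_n(x) = q_(n-1)(x) / q_n(x).  The classical identity
   x * Tx * ... * T^(n-1) x = 1 / (q_n + q_(n-1) T^n x) turns delta into
   delta_n(x) = - log (1 + r_n(x) T^n x).  The continuants of x up to level
   n = m + k are those of y = T^m x up to level k, started from (q_m, q_(m-1))
   instead of (1, 0); as the continuant matrix has determinant +-1, this moves
   the ratio by at most 1 / (q_k(y) (q_k(y) + p_k(y))) < 2^(-k/2), because
   q_k grows at least like 2^((k-1)/2).  Finally log (1 + .) is 1-Lipschitz
   on [0, oo) and t <= - log (1 - t). *)

Lemma ln_le_sub_1 z : 0 < z -> ln z <= z - 1.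
Proof.
  intros Hz. pose proof (exp_ineq1_le (ln z)) as H. rewrite exp_ln in H; lra.
Qed.

Lemma ln_sub_le x y : 0 < x -> 0 < y -> ln x - ln y <= (x - y) / y.
Proof.
  intros Hx Hy.
  assert (Hxy : 0 < x / y) by (apply Rdiv_lt_0_compat; lra).
  replace (ln x - ln y) with (ln (x / y))
    by (unfold Rdiv; rewrite ln_mult, ln_Rinv by (auto; apply Rinv_0_lt_compat; lra); ring).
  replace ((x - y) / y) with (x / y - 1) by (field; lra).
  now apply ln_le_sub_1.
Qed.

Lemma Rabs_ln_1_plus_sub_le a b : 0 <= a -> 0 <= b ->
  Rabs (ln (1 + a) - ln (1 + b)) <= Rabs (a - b).
Proof.
  assert (Hone : forall c d, 0 <= c -> 0 <= d -> ln (1 + c) - ln (1 + d) <= Rabs (c - d)).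
  { intros c d Hc Hd.
    eapply Rle_trans; [apply ln_sub_le; lra|].
    replace (1 + c - (1 + d)) with (c - d) by ring.
    assert (Hw : 0 < / (1 + d) <= 1).
    { split; [apply Rinv_0_lt_compat; lra|].
      rewrite <- Rinv_1; apply Rinv_le_contravar; lra. }
    pose proof (Rle_abs (c - d)); pose proof (Rabs_pos (c - d)).
    unfold Rdiv; nra. }
  intros Ha Hb.
  pose proof (Hone a b Ha Hb); pose proof (Hone b a Hb Ha) as Hba.
  rewrite Rabs_minus_sym in Hba.
  apply Rabs_le; lra.
Qed.

Lemma Rabs_ln_1_plus_mul_sub_le r s z : 0 <= r -> 0 <= s -> 0 <= z <= 1 ->
  Rabs (ln (1 + r * z) - ln (1 + s * z)) <= Rabs (r - s).
Proof.
  intros Hr Hs Hz.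
  eapply Rle_trans; [apply Rabs_ln_1_plus_sub_le; nra|].
  rewrite <- Rmult_minus_distr_r, Rabs_mult, (Rabs_pos_eq z) by lra.
  pose proof (Rabs_pos (r - s)). nra.
Qed.

Lemma le_neg_ln_1_sub t : t < 1 -> t <= - ln (1 - t).
Proof. intros Ht. pose proof (ln_le_sub_1 (1 - t)). lra. Qed.

Lemma Rpower_2_neg_half_sqr k : Rpower 2 (- INR k / 2) ^ 2 = / 2 ^ k.
Proof.
  rewrite <- Rpower_pow, Rpower_mult by apply exp_pos.
  replace (- INR k / 2 * INR 2) with (- INR k) by (simpl; field).
  now rewrite Rpower_Ropp, Rpower_pow by lra.
Qed.

Lemma Rpower_2_neg_half_lt_1 k : (1 <= k)%nat -> Rpower 2 (- INR k / 2) < 1.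
Proof.
  intros Hk. rewrite <- (Rpower_O 2) by lra.
  apply Rpower_lt; [lra|].
  assert (0 < INR k) by (apply lt_0_INR; lia). lra.
Qed.

Lemma inv_lt_Rpower_2_neg_half k X : 0 < X -> 2 ^ k < X ^ 2 -> / X < Rpower 2 (- INR k / 2).
Proof.
  intros HX Hk.
  pose proof (Rpower_2_neg_half_sqr k) as Ht2.
  assert (Ht : 0 < Rpower 2 (- INR k / 2)) by apply exp_pos.
  assert (Hinv : / X ^ 2 < / 2 ^ k)
    by (apply Rinv_lt_contravar; [apply Rmult_lt_0_compat; apply pow_lt|]; lra).
  rewrite <- pow_inv in Hinv.
  pose proof (Rinv_0_lt_compat X HX). nra.
Qed.

Lemma irrational_neq_0 x : irrational x -> x <> 0.
Proof. intros Hx E. apply (Hx 0%Z 1%Z); [discriminate|]. rewrite E. simpl. field. Qed.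

Lemma irrational_inv x : irrational x -> irrational (/ x).
Proof.
  intros Hx p q Hq E.
  assert (Hp : p <> 0%Z).
  { intros ->. apply (Rinv_neq_0_compat x (irrational_neq_0 x Hx)).
    rewrite E. simpl. field. now apply not_0_IZR. }
  apply (Hx q p Hp). rewrite <- (Rinv_inv x), E.
  field. split; now apply not_0_IZR.
Qed.

Lemma irrational_sub_IZR x z : irrational x -> irrational (x - IZR z).
Proof.
  intros Hx p q Hq E. apply (Hx (z * q + p)%Z q Hq).
  replace x with (x - IZR z + IZR z) by ring. rewrite E, plus_IZR, mult_IZR.
  field. now apply not_0_IZR.
Qed.

Lemma irrational_gauss x : irrational x -> irrational (gauss x).
Proof. intros Hx. apply irrational_sub_IZR, irrational_inv, Hx. Qed.

Lemma gauss_pos x : irrational x -> 0 < gauss x.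
Proof.
  intros Hx. destruct (base_Int_part (/ x)) as [Hle _].
  pose proof (irrational_neq_0 _ (irrational_gauss x Hx)).
  unfold gauss, frac in *. lra.
Qed.

Lemma gauss_lt_1 x : gauss x < 1.
Proof. unfold gauss, frac. destruct (base_Int_part (/ x)). lra. Qed.

Lemma inv_eq_Int_part_add_gauss x : / x = IZR (Int_part (/ x)) + gauss x.
Proof. unfold gauss, frac. ring. Qed.

Lemma iterT_irrational x j : irrational x -> irrational (iterT j x).
Proof. intros Hx. induction j as [|j IH]; simpl; auto using irrational_gauss. Qed.

Lemma iterT_in_unit x j : 0 < x < 1 -> irrational x -> 0 < iterT j x < 1.
Proof.
  intros Hx Hirr. destruct j as [|j]; simpl; [exact Hx|].
  split; [apply gauss_pos, iterT_irrational, Hirr | apply gauss_lt_1].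
Qed.

Lemma iterT_add j m x : iterT j (iterT m x) = iterT (j + m) x.
Proof. induction j as [|j IH]; simpl; congruence. Qed.

Lemma Int_part_inv_ge_1 z : 0 < z < 1 -> 1 <= IZR (Int_part (/ z)).
Proof.
  intros Hz. destruct (base_Int_part (/ z)) as [_ Hgt].
  assert (Hinv : 1 < / z) by (rewrite <- Rinv_1; apply Rinv_lt_contravar; lra).
  assert (0 < Int_part (/ z))%Z by (apply lt_0_IZR; lra).
  apply IZR_le. lia.
Qed.

Lemma cf_digit_ge_1 x j : 0 < x < 1 -> irrational x -> 1 <= cf_digit x j.
Proof. intros Hx Hirr. now apply Int_part_inv_ge_1, iterT_in_unit. Qed.

Lemma cf_digit_iterT x m j : cf_digit (iterT m x) j = cf_digit x (m + j).
Proof. unfold cf_digit. now rewrite iterT_add, Nat.add_comm. Qed.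

(* Started from (1, 0) this gives (q_n, q_(n-1)); from (0, 1), the numerators (p_n, p_(n-1)). *)
Fixpoint continuant (a : nat -> R) (u v : R) (n : nat) : R * R :=
  match n with
  | O => (u, v)
  | S m => (a m * fst (continuant a u v m) + snd (continuant a u v m),
            fst (continuant a u v m))
  end.

Definition continuant_ratio (a : nat -> R) (n : nat) : R :=
  snd (continuant a 1 0 n) / fst (continuant a 1 0 n).

Definition shift (a : nat -> R) (m : nat) : nat -> R := fun j => a (m + j)%nat.

Lemma qpair_continuant n x : qpair n x = continuant (cf_digit x) 1 0 n.
Proof.
  induction n as [|n IH]; simpl; [reflexivity|].
  rewrite IH. now destruct (continuant (cf_digit x) 1 0 n).
Qed.

Lemma continuant_ext a b u v n : (forall j, a j = b j) ->
  continuant a u v n = continuant b u v n.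
Proof. intros Hab. induction n as [|n IH]; simpl; now rewrite ?IH, ?Hab. Qed.

Lemma continuant_ratio_ext a b n : (forall j, a j = b j) ->
  continuant_ratio a n = continuant_ratio b n.
Proof. intros Hab. unfold continuant_ratio. now rewrite (continuant_ext a b 1 0 n Hab). Qed.

Lemma continuant_add a u v m k :
  continuant a u v (m + k) =
  continuant (shift a m) (fst (continuant a u v m)) (snd (continuant a u v m)) k.
Proof.
  induction k as [|k IH]; simpl.
  - rewrite Nat.add_0_r. now destruct (continuant a u v m).
  - rewrite Nat.add_succ_r. simpl. now rewrite IH.
Qed.

Lemma continuant_linear a u v k :
  fst (continuant a u v k) = u * fst (continuant a 1 0 k) + v * fst (continuant a 0 1 k) /\
  snd (continuant a u v k) = u * snd (continuant a 1 0 k) + v * snd (continuant a 0 1 k).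
Proof.
  induction k as [|k [IH1 IH2]]; simpl; [split; ring|].
  rewrite IH1, IH2. split; ring.
Qed.

Lemma continuant_det a k :
  fst (continuant a 1 0 k) * snd (continuant a 0 1 k)
  - snd (continuant a 1 0 k) * fst (continuant a 0 1 k) = (-1) ^ k.
Proof. induction k as [|k IH]; simpl; [ring|]. rewrite <- IH. ring. Qed.

Section ContinuantGrowth.

Variable a : nat -> R.
Hypothesis a_ge_1 : forall j, 1 <= a j.

Lemma continuant_nonneg u v n : 0 <= u -> 0 <= v ->
  0 <= fst (continuant a u v n) /\ 0 <= snd (continuant a u v n).
Proof.
  intros Hu Hv. induction n as [|n [IH1 IH2]]; simpl; [lra|].
  pose proof (a_ge_1 n). split; nra.
Qed.

Lemma continuant_fst_S_ge u v n : 0 <= u -> 0 <= v ->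
  fst (continuant a u v n) + snd (continuant a u v n) <= fst (continuant a u v (S n)).
Proof.
  intros Hu Hv. destruct (continuant_nonneg u v n Hu Hv).
  pose proof (a_ge_1 n). simpl. nra.
Qed.

Lemma continuant_fst_le_S u v n : 0 <= u -> 0 <= v ->
  fst (continuant a u v n) <= fst (continuant a u v (S n)).
Proof.
  intros Hu Hv. pose proof (continuant_fst_S_ge u v n Hu Hv).
  destruct (continuant_nonneg u v n Hu Hv). lra.
Qed.

Lemma continuant_fst_ge_1 u v n : 1 <= u -> 0 <= v -> 1 <= fst (continuant a u v n).
Proof.
  intros Hu Hv. induction n as [|n IH]; [exact Hu|].
  pose proof (continuant_fst_le_S u v n). lra.
Qed.

Lemma continuant_01_fst_ge_1 n : 1 <= fst (continuant a 0 1 (S n)).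
Proof.
  induction n as [|n IH]; [simpl; lra|].
  pose proof (continuant_fst_le_S 0 1 (S n)). lra.
Qed.

Lemma continuant_snd_le_fst u v n : 0 <= v <= u ->
  snd (continuant a u v n) <= fst (continuant a u v n).
Proof.
  intros Hvu. destruct n as [|n]; simpl; [lra|].
  apply (continuant_fst_le_S u v n); lra.
Qed.

Lemma continuant_fst_growth n : 2 ^ n <= 2 * fst (continuant a 1 0 n) ^ 2.
Proof.
  assert (Hpair : forall n, 2 ^ n <= 2 * fst (continuant a 1 0 n) ^ 2 /\
                            2 ^ S n <= 2 * fst (continuant a 1 0 (S n)) ^ 2).
  { intros m. induction m as [|m [IH1 IH2]].
    - assert (H1 : 1 <= fst (continuant a 1 0 1)) by (apply continuant_fst_ge_1; lra).
      simpl in *. split; nra.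
    - split; [exact IH2|].
      set (P := fst (continuant a 1 0 m)) in *.
      assert (HP : 0 <= P) by (apply (continuant_nonneg 1 0 m); lra).
      assert (H2 : 2 * P <= fst (continuant a 1 0 (S (S m)))).
      { pose proof (continuant_fst_S_ge 1 0 (S m) ltac:(lra) ltac:(lra)) as Hs.
        pose proof (continuant_fst_le_S 1 0 m ltac:(lra) ltac:(lra)) as Hm.
        simpl snd in Hs. fold P in Hs, Hm. lra. }
      replace (2 ^ S (S m)) with (4 * 2 ^ m) by (simpl; ring).
      nra. }
  apply Hpair.
Qed.

End ContinuantGrowth.

Lemma Rabs_ratio_sub_le A B C D u v :
  0 < A -> 0 <= C -> 0 < u -> 0 <= v <= u -> Rabs (A * D - B * C) = 1 ->
  Rabs ((u * B + v * D) / (u * A + v * C) - B / A) <= / (A * (A + C)).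
Proof.
  intros HA HC Hu Hv Hdet.
  set (P := u * A + v * C).
  assert (HP : 0 < P) by (unfold P; nra).
  replace ((u * B + v * D) / P - B / A) with (v * (A * D - B * C) * / (P * A))
    by (unfold P in *; field; lra).
  rewrite !Rabs_mult, Hdet, Rabs_inv, !Rabs_pos_eq by nra.
  assert (Hgap : / (A * (A + C)) - v * 1 * / (P * A) = (u - v) * / (P * (A + C)))
    by (unfold P in *; field; lra).
  assert (0 <= (u - v) * / (P * (A + C)))
    by (apply Rmult_le_pos; [lra | left; apply Rinv_0_lt_compat; nra]).
  lra.
Qed.

Lemma continuant_ratio_nonneg a n : (forall j, 1 <= a j) -> 0 <= continuant_ratio a n.
Proof.
  intros Ha. unfold continuant_ratio.
  assert (1 <= fst (continuant a 1 0 n)) by (apply continuant_fst_ge_1; auto; lra).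
  apply Rmult_le_pos; [apply (continuant_nonneg a Ha 1 0 n); lra|].
  left. apply Rinv_0_lt_compat. lra.
Qed.

Lemma continuant_ratio_shift_lt a m k : (forall j, 1 <= a j) -> (1 <= k)%nat ->
  Rabs (continuant_ratio a (m + k) - continuant_ratio (shift a m) k)
  < Rpower 2 (- INR k / 2).
Proof.
  intros Ha Hk.
  assert (Hb : forall j, 1 <= shift a m j) by (intro; apply Ha).
  unfold continuant_ratio. rewrite continuant_add.
  destruct (continuant_linear (shift a m) (fst (continuant a 1 0 m))
              (snd (continuant a 1 0 m)) k) as [-> ->].
  set (A := fst (continuant (shift a m) 1 0 k)).
  set (C := fst (continuant (shift a m) 0 1 k)).
  assert (HA : 1 <= A) by (apply continuant_fst_ge_1; auto; lra).
  assert (HC : 1 <= C) by (destruct k as [|k]; [lia | apply continuant_01_fst_ge_1; auto]).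
  assert (Hgrowth : 2 ^ k <= 2 * A ^ 2) by (apply continuant_fst_growth; auto).
  eapply Rle_lt_trans; [apply Rabs_ratio_sub_le|].
  - lra.
  - lra.
  - apply Rlt_le_trans with 1; [lra | apply continuant_fst_ge_1; auto; lra].
  - split; [apply (continuant_nonneg a Ha 1 0 m); lra | apply continuant_snd_le_fst; auto; lra].
  - unfold A, C. rewrite continuant_det. apply pow_1_abs.
  - assert (H2A : 2 * A <= A * (A + C)) by nra.
    apply inv_lt_Rpower_2_neg_half; nra.
Qed.

Lemma logsum_continuant x n : 0 < x < 1 -> irrational x ->
  logsum n x = - ln (fst (continuant (cf_digit x) 1 0 n)
                     + snd (continuant (cf_digit x) 1 0 n) * iterT n x).
Proof.
  intros Hx Hirr.
  assert (Ha : forall j, 1 <= cf_digit x j) by (intro; now apply cf_digit_ge_1).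
  induction n as [|n IH]; simpl logsum.
  - simpl. replace (1 + 0 * x) with 1 by ring. rewrite ln_1. ring.
  - rewrite IH.
    set (z := iterT n x).
    set (P := fst (continuant (cf_digit x) 1 0 n)).
    set (Q := snd (continuant (cf_digit x) 1 0 n)).
    assert (Hz : 0 < z < 1) by now apply iterT_in_unit.
    assert (HP : 1 <= P) by (apply continuant_fst_ge_1; auto; lra).
    assert (HQ : 0 <= Q) by (apply (continuant_nonneg _ Ha 1 0 n); lra).
    assert (Hstep : fst (continuant (cf_digit x) 1 0 (S n))
                    + snd (continuant (cf_digit x) 1 0 (S n)) * iterT (S n) x
                    = (P + Q * z) * / z).
    { simpl. fold z P Q. unfold cf_digit. fold z.
      pose proof (inv_eq_Int_part_add_gauss z) as Hinv.
      replace (gauss z) with (/ z - IZR (Int_part (/ z))) by lra.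
      field. lra. }
    rewrite Hstep, ln_mult, ln_Rinv by (try apply Rinv_0_lt_compat; nra).
    ring.
Qed.

Lemma delta_continuant_ratio x n : 0 < x < 1 -> irrational x ->
  delta n x = - ln (1 + continuant_ratio (cf_digit x) n * iterT n x).
Proof.
  intros Hx Hirr.
  assert (Ha : forall j, 1 <= cf_digit x j) by (intro; now apply cf_digit_ge_1).
  unfold delta, cf_q, continuant_ratio.
  rewrite qpair_continuant, logsum_continuant by auto.
  set (P := fst (continuant (cf_digit x) 1 0 n)).
  set (Q := snd (continuant (cf_digit x) 1 0 n)).
  assert (HP : 1 <= P) by (apply continuant_fst_ge_1; auto; lra).
  assert (HQz : 0 <= Q * iterT n x).
  { apply Rmult_le_pos; [apply (continuant_nonneg _ Ha 1 0 n); lra|].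
    left. now apply iterT_in_unit. }
  replace (P + Q * iterT n x) with (P * (1 + Q / P * iterT n x)) by (field; lra).
  rewrite ln_mult; [ring | lra |].
  replace (Q / P * iterT n x) with (Q * iterT n x * / P) by (field; lra).
  assert (0 <= Q * iterT n x * / P)
    by (apply Rmult_le_pos; [lra | left; apply Rinv_0_lt_compat; lra]).
  lra.
Qed.

Theorem lemma3p5 (k n : nat) (x : R) :
  (1 <= k)%nat -> (k < n)%nat -> 0 < x < 1 -> irrational x ->
  Rabs (delta k (iterT (n - k) x) - delta n x)
    < - ln (1 - Rpower 2 (- INR k / 2)).
Proof.
  intros Hk Hkn Hx Hirr.
  destruct (Nat.le_exists_sub k n) as [m [-> _]]; [lia|].
  replace (m + k - k)%nat with m by lia.
  assert (Ha : forall j, 1 <= cf_digit x j) by (intro; now apply cf_digit_ge_1).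
  rewrite (delta_continuant_ratio (iterT m x)), (delta_continuant_ratio x)
    by auto using iterT_in_unit, iterT_irrational.
  rewrite (continuant_ratio_ext _ (shift (cf_digit x) m)) by apply cf_digit_iterT.
  rewrite iterT_add, Nat.add_comm.
  set (z := iterT (m + k) x).
  set (r := continuant_ratio (cf_digit x) (m + k)).
  set (s := continuant_ratio (shift (cf_digit x) m) k).
  assert (Hz : 0 < z < 1) by now apply iterT_in_unit.
  assert (Hr : 0 <= r) by now apply continuant_ratio_nonneg.
  assert (Hs : 0 <= s) by (apply continuant_ratio_nonneg; intro; apply Ha).
  apply Rle_lt_trans with (Rabs (r - s)).
  - replace (- ln (1 + s * z) - - ln (1 + r * z)) with (ln (1 + r * z) - ln (1 + s * z)) by ring.
    apply Rabs_ln_1_plus_mul_sub_le; lra.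
  - eapply Rlt_le_trans; [now apply continuant_ratio_shift_lt|].
    now apply le_neg_ln_1_sub, Rpower_2_neg_half_lt_1.
Qed.
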